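(* Let $P:\mathbb{Z}\times[2]\to\mathbb{R}^2$ be a circular net such that for each $j\in[2]$ the points $\{P_{i,j}\}_{i\in\mathbb{Z}}$ lie on a line $\mathcal{H}_j$. For $i\in\mathbb{Z}$ let $\mathcal{V}_i$ be the line $P_{i,1}\vee P_{i,2}$. Then the lines $\{\mathcal{V}_{2i}\}_{i\in\mathbb{Z}}$ are parallel, and the lines $\{\mathcal{V}_{2i+1}\}_{i\in\mathbb{Z}}$ are parallel.
   Context: $[2]=\{1,2\}$. A circular net $P:\mathbb{Z}\times[2]\to\mathbb{R}^2$ is a map such that for all $i$ the four points $P_{i,1},P_{i+1,1},P_{i+1,2},P_{i,2}$ lie on a circle. $X\vee Y$ denotes the line through $X$ and $Y$. Standing assumption: all data are generic (in general position subject to the stated constraints). *)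

(* Points of the plane R^2 are pairs (x, y) over an
   arbitrary real field R (the statement is purely algebraic). *)
From mathcomp Require Import all_boot all_order all_algebra.
Set Implicit Arguments.
Unset Strict Implicit.
Unset Printing Implicit Defensive.
Import Order.TTheory GRing.Theory Num.Theory.
Local Open Scope ring_scope.

Section Plane.
Variable R : realFieldType.

Definition pt := (R * R)%type.

Definition dist2 (a b : pt) : R := (a.1 - b.1) ^+ 2 + (a.2 - b.2) ^+ 2.

Definition cross4 (a b c d : pt) : R :=
  (b.1 - a.1) * (d.2 - c.2) - (b.2 - a.2) * (d.1 - c.1).

Definition concyclic (a b c d : pt) : Prop :=
  exists (o : pt) (r : R), 0 < r /\
    dist2 a o = r ^+ 2 /\ dist2 b o = r ^+ 2 /\
    dist2 c o = r ^+ 2 /\ dist2 d o = r ^+ 2.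

Definition on_a_line (Q : int -> pt) : Prop :=
  exists (p v : pt), v != (0, 0) /\
    forall i, exists t : R, Q i = (p.1 + t * v.1, p.2 + t * v.2).

Definition parallel_lines (a b c d : pt) : Prop := cross4 a b c d = 0.

End Plane.

(* [2] = {1,2}, represented by 'I_2 = {0,1} *)
Definition j1 : 'I_2 := @Ordinal 2 0 isT.
Definition j2 : 'I_2 := @Ordinal 2 1 isT.

Definition circular_net (R : realFieldType) (P : int -> 'I_2 -> pt R) : Prop :=
  forall i : int, concyclic (P i j1) (P (i + 1) j1) (P (i + 1) j2) (P i j2).

Definition generic_net (R : realFieldType) (P : int -> 'I_2 -> pt R) : Prop :=
  forall (i k : int) (j l : 'I_2), P i j = P k l -> i = k /\ j = l.

(* Read points of the plane as complex numbers.  Four points A, B on a line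
   of direction u and D, E on a line of direction v are concyclic iff the
   cross-ratio is real, which here means arg (D - A) + arg (E - B) = arg u +
   arg v (mod pi): the chords AD and BE are antiparallel with respect to the
   two lines.  Two consecutive quadrilaterals of the net share a rung, so the
   rungs on either side of it are both antiparallel to it, hence parallel to
   each other; an induction along the even and the odd indices concludes. *)
From mathcomp Require Import all_boot all_order all_algebra.
From mathcomp Require Import ring zify.
Set Implicit Arguments. Unset Strict Implicit. Unset Printing Implicit Defensive.
Import Order.TTheory GRing.Theory Num.Theory.
Local Open Scope ring_scope.

Section ComplexPlane.
Variable R : realFieldType.
Implicit Types (x y z w : pt R) (r : R).

Definition cmul x y : pt R := (x.1 * y.1 - x.2 * y.2, x.1 * y.2 + x.2 * y.1).
Definition cconj x : pt R := (x.1, - x.2).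
Definition sqnorm x : R := x.1 ^+ 2 + x.2 ^+ 2.
Definition det2 x y : R := x.1 * y.2 - x.2 * y.1.

Lemma sqnorm_gt0 x : x != 0 -> 0 < sqnorm x.
Proof.
case: x => x1 x2 x0; rewrite /sqnorm /= lt0r paddr_eq0 ?addr_ge0 ?sqr_ge0 // andbT.
by rewrite !sqrf_eq0; apply: contra x0 => /andP[/eqP-> /eqP->].
Qed.

Lemma sqnorm_cmul x y : sqnorm (cmul x y) = sqnorm x * sqnorm y.
Proof. by rewrite /sqnorm /cmul /=; ring. Qed.

Lemma cmul_neq0 x y : x != 0 -> y != 0 -> cmul x y != 0.
Proof.
move=> /sqnorm_gt0 x0 /sqnorm_gt0 y0; apply/eqP => xy0.
by move: (mulr_gt0 x0 y0); rewrite -sqnorm_cmul xy0 /sqnorm expr0n addr0 ltxx.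
Qed.

Lemma cconj_neq0 x : x != 0 -> cconj x != 0.
Proof.
by case: x => x1 x2; apply: contra_neq => -[-> /eqP]; rewrite oppr_eq0 => /eqP ->.
Qed.

Lemma pt_scale_eq0 y r : y != 0 -> y.1 * r = 0 -> y.2 * r = 0 -> r = 0.
Proof.
case: y => y1 y2 y0 /= /eqP h1 /eqP h2; apply/eqP; apply: contraNT y0 => r0.
by move: h1 h2; rewrite !mulf_eq0 (negbTE r0) !orbF => /eqP -> /eqP ->.
Qed.

Lemma det2C x y : det2 y x = - det2 x y.
Proof. by rewrite /det2; ring. Qed.

Lemma det2_trans y x z : y != 0 -> det2 x y = 0 -> det2 y z = 0 -> det2 x z = 0.
Proof.
move=> y0 xy yz; apply: (pt_scale_eq0 y0).
- have -> : y.1 * det2 x z = x.1 * det2 y z + z.1 * det2 x y by rewrite /det2; ring.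
  by rewrite xy yz !mulr0 addr0.
- have -> : y.2 * det2 x z = x.2 * det2 y z + z.2 * det2 x y by rewrite /det2; ring.
  by rewrite xy yz !mulr0 addr0.
Qed.

(* If x w and y w are both real, x and y are real multiples of conj w. *)
Lemma im_cmul_eq0_det2 w x y :
  w != 0 -> (cmul x w).2 = 0 -> (cmul y w).2 = 0 -> det2 x y = 0.
Proof.
move=> w0 xw yw; apply: (pt_scale_eq0 (cconj_neq0 w0)).
- have -> : (cconj w).1 * det2 x y = x.1 * (cmul y w).2 - y.1 * (cmul x w).2
    by rewrite /det2 /cmul /=; ring.
  by rewrite xw yw !mulr0 subrr.
- have -> : (cconj w).2 * det2 x y = x.2 * (cmul y w).2 - y.2 * (cmul x w).2
    by rewrite /det2 /cmul /=; ring.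
  by rewrite xw yw !mulr0 subrr.
Qed.

(* The imaginary part of the cross-ratio ((d - a)(c - b)) / ((b - a)(c - d)),
   scaled by the positive factor |(b - a)(c - d)|^2. *)
Definition cross_ratio_im (a b c d : pt R) : R :=
  (cmul (cmul (d - a) (c - b)) (cconj (cmul (b - a) (c - d)))).2.

Lemma concyclic_cross_ratio_im a b c d :
  concyclic a b c d -> cross_ratio_im a b c d = 0.
Proof.
case=> o [r [_ [ha [hb [hc hd]]]]].
(* Up to sign, the expansion along the first column of the determinant with
   rows (dist2 x o - r^2, x.1, x.2, 1) for x = a, b, c, d. *)
have -> : cross_ratio_im a b c d =
    (dist2 a o - r ^+ 2) * cross4 b c b d - (dist2 b o - r ^+ 2) * cross4 a c a d
  + (dist2 c o - r ^+ 2) * cross4 a b a d - (dist2 d o - r ^+ 2) * cross4 a b a c.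
  move: a b c d o {ha hb hc hd} => [a1 a2] [b1 b2] [c1 c2] [d1 d2] [o1 o2].
  by rewrite /cross_ratio_im /cmul /cconj /dist2 /cross4 /=; ring.
by rewrite ha hb hc hd subrr !mul0r subrr add0r subrr.
Qed.

Definition line_pt (p u : pt R) (t : R) : pt R := (p.1 + t * u.1, p.2 + t * u.2).
Definition on_line (p u x : pt R) : Prop := exists t, x = line_pt p u t.

(* [antipar u v x y = 0] says arg x + arg y = arg u + arg v (mod pi): the
   directions x and y are mirror images in a bisector of u and v. *)
Definition antipar (u v x y : pt R) : R := (cmul (cmul x y) (cconj (cmul u v))).2.

Lemma antiparC u v x y : antipar u v x y = antipar u v y x.
Proof. by rewrite /antipar /cmul /=; ring. Qed.

Lemma antipar_det2 u v x y z : u != 0 -> v != 0 -> y != 0 ->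
  antipar u v x y = 0 -> antipar u v z y = 0 -> det2 x z = 0.
Proof.
move=> u0 v0 y0.
have antiparE t : antipar u v t y = (cmul t (cmul y (cconj (cmul u v)))).2.
  by rewrite /antipar /cmul /cconj /=; ring.
rewrite !antiparE; apply: im_cmul_eq0_det2.
exact/cmul_neq0/cconj_neq0/cmul_neq0.
Qed.

Lemma cross_ratio_im_line_pt p q u v a b d e :
  cross_ratio_im (line_pt p u a) (line_pt p u b) (line_pt q v e) (line_pt q v d) =
  (b - a) * (e - d) *
    antipar u v (line_pt q v d - line_pt p u a) (line_pt q v e - line_pt p u b).
Proof.
move: p q u v => [p1 p2] [q1 q2] [u1 u2] [v1 v2].
by rewrite /cross_ratio_im /antipar /cmul /cconj /line_pt /=; ring.
Qed.

Lemma concyclic_antipar p q u v A B D E :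
  on_line p u A -> on_line p u B -> on_line q v D -> on_line q v E ->
  A != B -> D != E -> concyclic A B E D -> antipar u v (D - A) (E - B) = 0.
Proof.
move=> [a ->] [b ->] [d ->] [e ->] AB DE /concyclic_cross_ratio_im.
have ab : b - a != 0 by rewrite subr_eq0; apply: contraNneq AB => ->.
have de : e - d != 0 by rewrite subr_eq0; apply: contraNneq DE => ->.
rewrite cross_ratio_im_line_pt => /eqP.
by rewrite !mulf_eq0 (negbTE ab) (negbTE de) => /eqP.
Qed.

Lemma outer_rungs_parallel p q u v A B C D E F :
  u != 0 -> v != 0 ->
  on_line p u A -> on_line p u B -> on_line p u C ->
  on_line q v D -> on_line q v E -> on_line q v F ->
  A != B -> B != C -> D != E -> E != F -> B != E ->
  concyclic A B E D -> concyclic B C F E -> det2 (D - A) (F - C) = 0.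
Proof.
move=> u0 v0 onA onB onC onD onE onF AB BC DE EF BE ABED BCFE.
apply: (antipar_det2 (y := E - B) u0 v0).
- by rewrite subr_eq0 eq_sym.
- exact: (concyclic_antipar onA onB onD onE AB DE ABED).
- by rewrite antiparC; apply: (concyclic_antipar onB onC onE onF BC EF BCFE).
Qed.

Lemma det2_chain (V : int -> pt R) :
  (forall i, V i != 0) -> (forall i, det2 (V i) (V (i + 1)) = 0) ->
  forall i k, det2 (V i) (V k) = 0.
Proof.
move=> V0 step.
have up i (n : nat) : det2 (V i) (V (i + n)) = 0.
  elim: n => [|n IH]; first by rewrite addr0 /det2 mulrC subrr.
  rewrite (_ : i + n.+1 = i + n + 1); last by lia.
  exact: det2_trans (V0 _) IH (step _).
move=> i k; have [n [->|->]] : exists n : nat, k = i + n \/ i = k + n.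
  by exists `|k - i|%N; case: (lerP i k) => _; lia.
- exact: up.
- by rewrite det2C up oppr0.
Qed.

Lemma parallel_linesE a b c d : parallel_lines a b c d = (det2 (b - a) (d - c) = 0).
Proof. by []. Qed.

End ComplexPlane.

Definition rung (R : realFieldType) (P : int -> 'I_2 -> pt R) (i : int) : pt R :=
  P i j2 - P i j1.

Section CircularNet.
Variables (R : realFieldType) (P : int -> 'I_2 -> pt R).
Hypotheses (net : circular_net P) (generic : generic_net P)
  (lines : forall j, on_a_line (fun i => P i j)).

Lemma generic_net_neq i k j l : (i, j) != (k, l) -> P i j != P k l.
Proof. by apply: contra_neq => /generic [-> ->]. Qed.

Lemma rung_neq0 i : rung P i != 0.
Proof. by rewrite subr_eq0; apply: generic_net_neq; rewrite xpair_eqE eqxx. Qed.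

Lemma rung_parallel_add2 i : det2 (rung P i) (rung P (i + 2)) = 0.
Proof.
have [p [u [u0 on1]]] := lines j1; have [q [v [v0 on2]]] := lines j2.
have := net (i + 1); rewrite -addrA (_ : 1 + 1 = 2) // => next.
apply: (outer_rungs_parallel u0 v0 (on1 i) (on1 (i + 1)) (on1 (i + 2))
          (on2 i) (on2 (i + 1)) (on2 (i + 2))) (net i) next;
  apply: generic_net_neq; rewrite xpair_eqE /= ?andbT ?andbF //; apply/eqP; lia.
Qed.

End CircularNet.

Theorem proposition4p12 (R : realFieldType) (P : int -> 'I_2 -> pt R) :
  circular_net P ->
  generic_net P ->
  (forall j : 'I_2, on_a_line (fun i => P i j)) ->
  (forall i k : int,
      parallel_lines (P (2 * i) j1) (P (2 * i) j2) (P (2 * k) j1) (P (2 * k) j2)) /\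
  (forall i k : int,
      parallel_lines (P (2 * i + 1) j1) (P (2 * i + 1) j2)
                     (P (2 * k + 1) j1) (P (2 * k + 1) j2)).
Proof.
move=> net generic lines.
have step := rung_parallel_add2 net generic lines.
split=> i k; rewrite parallel_linesE.
- apply: (det2_chain (V := fun i => rung P (2 * i))) => [l|l].
    exact: (rung_neq0 generic).
  by rewrite (_ : 2 * (l + 1) = 2 * l + 2); [apply: step | lia].
- apply: (det2_chain (V := fun i => rung P (2 * i + 1))) => [l|l].
    exact: (rung_neq0 generic).
  by rewrite (_ : 2 * (l + 1) + 1 = 2 * l + 1 + 2); [apply: step | lia].
Qed.
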